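(* Let $G=(V,E)$ be a finite, undirected, connected graph with unit edge weights and vertex set $V=\{v_1,\dots,v_N\}$, let $L=D-A$ be its graph Laplacian, and let $\phi_{\lambda_1},\dots,\phi_{\lambda_N}$ be an orthonormal basis of $\mathbb{C}^N$ of eigenvectors of $L$ (with eigenvalues $\lambda_1,\dots,\lambda_N$). For $t\ge 0$ let $H_t=e^{-tL}$, and define the graph short-time Fourier transform $V_t:\mathbb{C}^N\to\mathbb{C}^{N\times N}$ by $$(V_tf)(v_i,\lambda_j)=\sum_{k=1}^N f(v_k)\,H_t(v_i,v_k)\,\overline{\phi_{\lambda_j}(v_k)}.$$ Define $W_t:\mathbb{C}^{N\times N}\to\mathbb{C}^N$ by $$(W_tF)(v_i)=\frac{1}{\|H_t(\cdot,v_i)\|^2}\sum_{j=1}^N\phi_{\lambda_j}(v_i)\Big[\sum_{k=1}^N F(v_k,\lambda_j)\,H_t(v_k,v_i)\Big].$$ Then $W_t$ is a left inverse of $V_t$, i.e. $W_tV_tf=f$ for all $f\in\mathbb{C}^N$.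
   Context: The graph Laplacian acts by $Lf(v)=\sum_{u\sim v}(f(v)-f(u))$; in matrix form $L=D-A$ with $A$ the adjacency matrix and $D$ the diagonal degree matrix. Vectors in $\mathbb{C}^N$ are functions on $V$; $\phi_{\lambda_j}(v_k)$ is the $v_k$-entry of $\phi_{\lambda_j}$; $H_t(v_i,v_k)$ is the $(i,k)$ entry of $H_t$ and $H_t(\cdot,v_i)$ its $i$-th column. Elements $F\in\mathbb{C}^{N\times N}$ are indexed as $F(v_k,\lambda_j)$, $k,j\in\{1,\dots,N\}$. *)

From mathcomp Require Import all_boot all_order all_algebra.
From mathcomp Require Import all_classical all_reals all_analysis.
From mathcomp Require Export complex.
Set Implicit Arguments. Unset Strict Implicit. Unset Printing Implicit Defensive.
Import Order.TTheory GRing.Theory Num.Theory.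
Import numFieldNormedType.Exports.
Local Open Scope ring_scope.

(* A finite undirected simple graph on vertex set V = 'I_N = {v_1..v_N},
   given by its adjacency relation e (unit edge weights). *)
Definition simple_graph (N : nat) (e : rel 'I_N) : Prop :=
  symmetric e /\ irreflexive e.

Definition connected_graph (N : nat) (e : rel 'I_N) : Prop :=
  forall x y : 'I_N, connect e x y.

Definition deg (N : nat) (e : rel 'I_N) (i : 'I_N) : nat := #|[set k | e i k]|.

Definition laplacian (R : pzRingType) (N : nat) (e : rel 'I_N) : 'M[R]_N :=
  \matrix_(i, j) ((i == j)%:R * (deg e i)%:R - (e i j)%:R).

Definition mxpow (R : pzRingType) (N : nat) (A : 'M[R]_N) (n : nat) : 'M[R]_N :=
  iter n (mulmx A) 1%:M.

Definition mxexp (R : realType) (N : nat) (A : 'M[R]_N) : 'M[R]_N :=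
  \matrix_(i, k) limn (series (fun n => (n`!%:R)^-1 * mxpow A n i k : R)).

Definition heat_kernel (R : realType) (N : nat) (e : rel 'I_N) (t : R)
  : 'M[R[i]]_N :=
  map_mx (fun x : R => (x%:C)%C) (mxexp ((- t) *: laplacian R e)).

(* graph short-time Fourier transform; Phi's j-th column is phi_{lambda_j},
   so Phi k j = phi_{lambda_j}(v_k); (V_t f)(v_i, lambda_j) = result i j *)
Definition gSTFT (R : realType) (N : nat) (e : rel 'I_N) (t : R)
  (Phi : 'M[R[i]]_N) (f : 'I_N -> R[i]) : 'M[R[i]]_N :=
  \matrix_(i, j) \sum_(k < N) f k * heat_kernel e t i k * (Phi k j)^*.

(* W_t F ; F k j = F(v_k, lambda_j) *)
Definition gISTFT (R : realType) (N : nat) (e : rel 'I_N) (t : R)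
  (Phi : 'M[R[i]]_N) (F : 'M[R[i]]_N) : 'I_N -> R[i] :=
  fun i => (\sum_(k < N) `|heat_kernel e t k i| ^+ 2)^-1 *
    \sum_(j < N) Phi i j * (\sum_(k < N) F k j * heat_kernel e t k i).

(* Substitute V_t into W_t: since the rows of the unitary matrix Phi satisfy
   sum_j phi_j(v_i) conj(phi_j(v_m)) = delta_im, the double sum collapses to
   f(v_i) sum_k H_t(v_k, v_i)^2, which is f(v_i) ||H_t(., v_i)||^2 because
   H_t is real.  It remains to see that the column H_t(., v_i) is nonzero: the
   eigenvalues of the symmetric matrix L are real, and the spectral expansion
   H_t(v_i, v_i) = sum_j |phi_j(v_i)|^2 e^(-t lambda_j) is positive since the
   weights |phi_j(v_i)|^2 are nonnegative with sum 1. *)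

From mathcomp Require Import all_boot all_order all_algebra.
From mathcomp Require Import all_classical all_reals all_analysis.
From mathcomp Require Import complex sesquilinear spectral ring.
Set Implicit Arguments.
Unset Strict Implicit.
Unset Printing Implicit Defensive.

Import Order.TTheory GRing.Theory Num.Theory.
Import numFieldNormedType.Exports.
Local Open Scope ring_scope.
Local Open Scope sesquilinear_scope.

Lemma orthonormal_cols_unitarymx {C : numClosedFieldType} N (Phi : 'M[C]_N) :
  (forall j j', \sum_(k < N) (Phi k j)^* * Phi k j' = (j == j')%:R) ->
  Phi \is unitarymx.
Proof.
move=> Phi_orth; rewrite -trmxC_unitary; apply/unitarymxP; rewrite trmxCK.
apply/matrixP => j j'; rewrite !mxE -Phi_orth.
by apply: eq_bigr => k _; rewrite !mxE.
Qed.

Lemma unitarymx_rowsE {C : numClosedFieldType} N (Phi : 'M[C]_N) i i' :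
  Phi \is unitarymx -> \sum_(j < N) Phi i j * (Phi i' j)^* = (i == i')%:R.
Proof.
move=> /unitarymxP /matrixP /(_ i i'); rewrite !mxE => <-.
by apply: eq_bigr => j _; rewrite !mxE.
Qed.

Lemma unitarymx_row_norm {C : numClosedFieldType} N (Phi : 'M[C]_N) i :
  Phi \is unitarymx -> \sum_(j < N) `|Phi i j| ^+ 2 = 1.
Proof.
move=> /(unitarymx_rowsE i i); rewrite eqxx mulr1n => <-.
by apply: eq_bigr => j _; rewrite normCK.
Qed.

Lemma eigen_cols_mulmx_diag (R : comPzRingType) N (A Phi : 'M[R]_N)
    (lam : 'I_N -> R) :
  (forall j, A *m col j Phi = lam j *: col j Phi) ->
  A *m Phi = Phi *m diag_mx (\row_j lam j).
Proof.
move=> Phi_eigen; apply/matrixP => k j; rewrite mul_mx_diag !mxE mulrC.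
have /matrixP /(_ k 0) := Phi_eigen j; rewrite !mxE => <-.
by apply: eq_bigr => m _; rewrite !mxE.
Qed.

Lemma map_mxpow (R S : pzRingType) (f : {rmorphism R -> S}) N (A : 'M[R]_N) n :
  map_mx f (mxpow A n) = mxpow (map_mx f A) n.
Proof. by elim: n => [|n IHn]; rewrite /= ?map_mx1 // map_mxM IHn. Qed.

Section UnitaryDiagonalization.
Variables (C : numClosedFieldType) (N : nat) (Phi A : 'M[C]_N) (d : 'rV[C]_N).
Hypotheses (Phi_unitary : Phi \is unitarymx)
  (A_diag : A *m Phi = Phi *m diag_mx d).

Lemma unitary_diag_mxpow n :
  mxpow A n = Phi *m diag_mx (map_mx (fun x => x ^+ n) d) *m Phi^t*.
Proof.
elim: n => [|n IHn] /=.
  rewrite (_ : map_mx _ d = const_mx 1) ?diag_const_mx ?mulmx1 ?(unitarymxP _) //.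
  by apply/matrixP => a b; rewrite !mxE expr0.
rewrite IHn !mulmxA A_diag -[Phi *m diag_mx d *m _]mulmxA mulmx_diag.
by congr (_ *m diag_mx _ *m _); apply/matrixP => a b; rewrite !mxE ord1 exprS.
Qed.

Lemma unitary_diag_mxpowE i n :
  mxpow A n i i = \sum_(j < N) `|Phi i j| ^+ 2 * d 0 j ^+ n.
Proof.
rewrite unitary_diag_mxpow mxE; apply: eq_bigr => j _.
by rewrite mul_mx_diag !mxE normCK mulrAC.
Qed.

Lemma hermitian_eigenvalue_real : A \is hermsymmx -> forall j, (d 0 j)^* = d 0 j.
Proof.
move=> /is_hermitianmxP; rewrite expr0 scale1r => A_herm j.
have d_conj : diag_mx d = Phi^t* *m A *m Phi.
  by rewrite -mulmxA A_diag mulmxA -[Phi^t*]mul1mx mulmxKtV ?mul1mx.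
have /matrixP /(_ j j) : (diag_mx d)^t* = diag_mx d.
  by rewrite d_conj !trmx_mul !map_mxM -A_herm trmxCK mulmxA.
by rewrite !mxE eqxx !mulr1n.
Qed.

End UnitaryDiagonalization.

Section WindowedFourier.
Variables (C : numClosedFieldType) (N : nat).

(* gSTFT e t and gISTFT e t are these transforms for the window
   H = heat_kernel e t. *)
Definition stft (H Phi : 'M[C]_N) (f : 'I_N -> C) : 'M[C]_N :=
  \matrix_(i, j) \sum_(k < N) f k * H i k * (Phi k j)^*.

Definition istft (H Phi F : 'M[C]_N) : 'I_N -> C :=
  fun i => (\sum_(k < N) `|H k i| ^+ 2)^-1 *
    \sum_(j < N) Phi i j * (\sum_(k < N) F k j * H k i).

Lemma istftK (H Phi : 'M[C]_N) (f : 'I_N -> C) i :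
  Phi \is unitarymx -> (forall k, (H k i)^* = H k i) -> col i H != 0 ->
  istft H Phi (stft H Phi f) i = f i.
Proof.
move=> Phi_unitary H_real H_nz.
have col_norm_nz : \sum_(k < N) `|H k i| ^+ 2 != 0.
  have sqr_norm_ge0 k : true -> 0 <= `|H k i| ^+ 2 by rewrite exprn_ge0.
  apply: contra H_nz => /eqP /(psumr_eq0P sqr_norm_ge0) col0.
  apply/eqP/matrixP => k j; rewrite !mxE.
  by have /eqP := col0 k isT; rewrite sqrf_eq0 normr_eq0 => /eqP.
rewrite /istft; set s := \sum_(k < N) _.
suff -> : \sum_(j < N) Phi i j * \sum_(k < N) stft H Phi f k j * H k i = f i * s.
  by rewrite mulrCA mulVf ?mulr1.
transitivity (\sum_(k < N) \sum_(m < N) f m * H k m * H k i *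
                \sum_(j < N) Phi i j * (Phi m j)^*).
  under eq_bigr => j _ do under eq_bigr do rewrite mxE mulr_suml.
  under eq_bigr do rewrite mulr_sumr.
  under eq_bigr do under eq_bigr do rewrite mulr_sumr.
  under [RHS]eq_bigr do under eq_bigr do rewrite mulr_sumr.
  rewrite exchange_big; apply: eq_bigr => k _ /=; rewrite exchange_big.
  by apply: eq_bigr => m _; apply: eq_bigr => j _; ring.
rewrite mulr_sumr; apply: eq_bigr => k _.
rewrite (bigD1 i) //= unitarymx_rowsE // eqxx mulr1 big1 ?addr0 => [|m m_i].
  by rewrite normCK H_real mulrA.
by rewrite unitarymx_rowsE // eq_sym (negbTE m_i) mulr0.
Qed.

End WindowedFourier.

Lemma conjc_id_real (R : rcfType) (z : R[i]) :
  (z^*)%C = z -> z = ((complex.Re z)%:C)%C.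
Proof.
by move=> zJ; rewrite {1}[z]complexE ImJ_sub zJ subrr !mul0r mulr0 addr0.
Qed.

Lemma real_symmetric_hermsym (R : rcfType) N (M : 'M[R]_N) :
  M^T = M -> map_mx (real_complex R) M \is hermsymmx.
Proof.
move=> M_sym; apply/is_hermitianmxP; rewrite expr0 scale1r.
by apply/matrixP => a b; rewrite !mxE -[in LHS]M_sym mxE; apply/esym/conjc_real.
Qed.

Lemma mxexp_power_sums (R : realType) N (M : 'M[R]_N) i k (w x : 'I_N -> R) :
  (forall n, mxpow M n i k = \sum_(j < N) w j * x j ^+ n) ->
  mxexp M i k = \sum_(j < N) w j * expR (x j).
Proof.
move=> M_pow; rewrite mxE; apply: cvg_lim => //.
have -> : series (fun n => n`!%:R^-1 * mxpow M n i k) =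
          (fun n => \sum_(j < N) w j * series (exp_coeff (x j)) n).
  apply/funext => n; rewrite /series /=.
  under eq_bigr do rewrite M_pow mulr_sumr.
  rewrite exchange_big; apply: eq_bigr => j _; rewrite mulr_sumr.
  by apply: eq_bigr => m _; rewrite /exp_coeff /= mulrCA [_^-1 * _]mulrC.
apply: cvg_big => //; first exact: add_continuous.
by move=> j _; apply: cvgMl_tmp; exact: is_cvg_series_exp_coeff.
Qed.

Lemma psum_expR_gt0 (R : realType) (I : finType) (w x : I -> R) :
  (forall j, 0 <= w j) -> \sum_j w j != 0 -> 0 < \sum_j w j * expR (x j).
Proof.
move=> w_ge0 w_nz.
have wexp_ge0 j : 0 <= w j * expR (x j) by rewrite mulr_ge0 ?expR_ge0.
rewrite lt_def sumr_ge0 // andbT psumr_neq0 //.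
move: w_nz; rewrite psumr_neq0 // => /hasP [j _ /andP [_ wj_gt0]].
by apply/hasP; exists j => //; rewrite mulr_gt0 ?expR_gt0.
Qed.

Lemma mxexp_diag_gt0 (R : realType) N (M : 'M[R]_N) (Phi : 'M[R[i]]_N)
    (d : 'rV[R[i]]_N) i :
  M^T = M -> Phi \is unitarymx ->
  map_mx (real_complex R) M *m Phi = Phi *m diag_mx d -> 0 < mxexp M i i.
Proof.
move=> M_sym Phi_unitary M_diag.
pose w j := complex.Re (Phi i j) ^+ 2 + complex.Im (Phi i j) ^+ 2.
pose x j := complex.Re (d 0 j).
have wE j : (w j)%:C%C = `|Phi i j| ^+ 2 := add_Re2_Im2 _.
have dE j : d 0 j = (x j)%:C%C.
  apply: conjc_id_real; apply: (hermitian_eigenvalue_real Phi_unitary M_diag).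
  exact: real_symmetric_hermsym.
rewrite (@mxexp_power_sums _ _ _ _ _ w x) => [|n].
  apply: psum_expR_gt0 => [j|]; first by rewrite addr_ge0 ?sqr_ge0.
  rewrite -(fmorph_eq0 (real_complex R)) rmorph_sum.
  by under eq_bigr do (rewrite /= wE); rewrite unitarymx_row_norm ?oner_eq0.
apply: complexI.
have := congr1 (fun A : 'M[R[i]]_N => A i i) (map_mxpow (real_complex R) M n).
rewrite mxE /= => ->; rewrite (unitary_diag_mxpowE Phi_unitary M_diag) rmorph_sum.
by apply: eq_bigr => j _; rewrite rmorphM rmorphXn /= wE dE.
Qed.

Lemma tr_laplacian (R : pzRingType) N (e : rel 'I_N) :
  symmetric e -> (laplacian R e)^T = laplacian R e.
Proof.
move=> e_sym; apply/matrixP => a b; rewrite !mxE e_sym.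
by case: eqVneq => [->|]; rewrite ?mul0r.
Qed.

Theorem theorem3p3 (R : realType) (N : nat) (e : rel 'I_N)
  (Phi : 'M[R[i]]_N) (lam : 'I_N -> R[i]) (t : R) :
  simple_graph e ->
  connected_graph e ->
  (* columns of Phi form an orthonormal basis of C^N *)
  (forall j j' : 'I_N, \sum_(k < N) (Phi k j)^* * Phi k j' = (j == j')%:R) ->
  (* column j of Phi is an eigenvector of L with eigenvalue lam j *)
  (forall j : 'I_N,
     map_mx (fun x : R => (x%:C)%C) (laplacian R e) *m col j Phi = lam j *: col j Phi) ->
  0 <= t ->
  forall f : 'I_N -> R[i], forall i : 'I_N,
    gISTFT e t Phi (gSTFT e t Phi f) i = f i.
Proof.
move=> [e_sym _] _ Phi_orth Phi_eigen _ f i.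
have Phi_unitary := orthonormal_cols_unitarymx Phi_orth.
set M := - t *: laplacian R e.
have M_sym : M^T = M by rewrite linearZ /= tr_laplacian.
have M_diag : map_mx (real_complex R) M *m Phi =
              Phi *m diag_mx ((- t)%:C%C *: \row_j lam j).
  rewrite map_mxZ -scalemxAl (eigen_cols_mulmx_diag Phi_eigen).
  by rewrite linearZ scalemxAr.
have K_pos := mxexp_diag_gt0 i M_sym Phi_unitary M_diag.
apply: istftK => // [k|]; first by rewrite mxE; apply: conjc_real.
apply: contraTneq K_pos => /matrixP /(_ i 0); rewrite !mxE => /eqP.
by rewrite fmorph_eq0 => /eqP ->; rewrite ltxx.
Qed.
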